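(* Let $X$ be a uniform space equipped with a uniformly continuous and expansive action of a group $\Gamma$, and let $f \colon X \to X$ be a uniformly continuous and $\Gamma$-equivariant map. Suppose that $Y$ is a subset of $X$ such that the restriction of $f$ to $Y$ is a uniform embedding. Then there exists an entourage $V$ of $X$ with the following property: if $Z$ is a $\Gamma$-invariant subset of $X$ such that $Z \subset V[Y]$, then the restriction of $f$ to $Z$ is injective.
   Context: For $V \subset X \times X$ and $A \subset X$, $V[A] = \{x \in X : (x,a) \in V \text{ for some } a \in A\}$. An action of $\Gamma$ on a uniform space $X$ is uniformly continuous if each map $x \mapsto \gamma x$ is uniformly continuous; it is expansive if there is an entourage $W_0$ of $X$ such that for any two distinct $x,y \in X$ there is $\gamma \in \Gamma$ with $(\gamma x,\gamma y) \notin W_0$. A map $f$ restricted to $Y$ is a uniform embedding if it is injective on $Y$ and induces a uniform isomorphism from $Y$ onto $f(Y)$ (with the induced uniform structures). *)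

From HB Require Import structures.
From mathcomp Require Import all_boot all_order.
From mathcomp Require Import all_classical all_reals all_analysis.
Set Implicit Arguments. Unset Strict Implicit. Unset Printing Implicit Defensive.
Local Open Scope classical_set_scope.

Definition is_group (G : Type) (mul : G -> G -> G) (one : G) (inv : G -> G) :=
  [/\ forall a b c, mul a (mul b c) = mul (mul a b) c,
      forall a, mul one a = a
    & forall a, mul (inv a) a = one].

Definition is_action (G X : Type) (mul : G -> G -> G) (one : G)
  (act : G -> X -> X) :=
  (forall x, act one x = x) /\
  (forall g h x, act (mul g h) x = act g (act h x)).

Definition ent_img (X : Type) (V : set (X * X)) (A : set X) : set X :=
  [set x | exists2 a, A a & V (x, a)].

Definition expansive_action (G : Type) (X : uniformType) (act : G -> X -> X) :=
  exists2 W0 : set (X * X), entourage W0 &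
    forall x y : X, x <> y -> exists g : G, ~ W0 (act g x, act g y).

(* f restricted to Y is a uniform embedding: injective on Y and a uniform
   isomorphism Y -> f(Y) for the induced uniform structures. *)
Definition uniform_embedding_on (X : uniformType) (f : X -> X) (Y : set X) :=
  [/\ {in Y &, injective f},
      (forall F : set (X * X), entourage F ->
         exists2 E : set (X * X), entourage E &
           forall y1 y2, Y y1 -> Y y2 -> E (y1, y2) -> F (f y1, f y2))
    & (forall E : set (X * X), entourage E ->
         exists2 F : set (X * X), entourage F &
           forall y1 y2, Y y1 -> Y y2 -> F (f y1, f y2) -> E (y1, y2))].

From HB Require Import structures.
From mathcomp Require Import all_boot all_order.
From mathcomp Require Import all_classical all_reals all_analysis.
Set Implicit Arguments. Unset Strict Implicit. Unset Printing Implicit Defensive.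
Local Open Scope classical_set_scope.

(* If z1, z2 lie V-close to points y1, y2 of Y and f z1 = f z2, then f y1 and
   f y2 are close, so y1 and y2 are close because f^-1 is uniformly continuous
   on f(Y); hence z1 and z2 are close.  Applying this with the expansivity
   entourage to the translates g z1, g z2, which stay in the invariant set Z
   and still have equal images by equivariance, shows that two distinct points
   of Z with the same image cannot exist. *)

Lemma uniform_embedding_on_fiber_ent (X : uniformType) (f : X -> X) (Y : set X)
  (W : set (X * X)) :
  unif_continuous f -> uniform_embedding_on f Y -> entourage W ->
  exists2 V : set (X * X), entourage V &
    forall z1 z2, ent_img V Y z1 -> ent_img V Y z2 -> f z1 = f z2 -> W (z1, z2).
Proof.
move=> hf [_ _ hinv] eW.
pose D := split_ent (split_ent W).
have eD : entourage D by do 2 apply: entourage_split_ent.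
have [F eF hF] := hinv D eD.
pose U := D `&` [set xy | split_ent F (f xy.1, f xy.2)].
have eU : entourage U by apply: filterI => //; apply: hf; exact: entourage_split_ent.
exists (U `&` U^-1)%relation; first exact: entourage_invI.
move=> z1 z2 [y1 Yy1 [[Dz1y1 _] [_ Fy1z1]]] [y2 Yy2 [[_ Fz2y2] [Dy2z2 _]]] fz12.
have Dy12 : D (y1, y2).
  apply: hF => //; apply: (entourage_split (f z1)) => //=.
  by rewrite fz12.
apply: (entourage_split y2) => //.
- exact: (entourage_split y1).
- by apply: split_ent_subset => //; exact: entourage_split_ent.
Qed.

Lemma expansive_equivariant_injective (G X : Type) (act : G -> X -> X)
  (f : X -> X) (W0 : set (X * X)) (Z : set X) :
  (forall x y, x <> y -> exists g, ~ W0 (act g x, act g y)) ->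
  (forall g x, f (act g x) = act g (f x)) ->
  (forall g z, Z z -> Z (act g z)) ->
  (forall z1 z2, Z z1 -> Z z2 -> f z1 = f z2 -> W0 (z1, z2)) ->
  {in Z &, injective f}.
Proof.
move=> hexp hfeq hZ hW0 z1 z2 /set_mem Zz1 /set_mem Zz2 fz12.
apply: contrapT => /hexp [g]; apply.
by apply: hW0; [exact: hZ | exact: hZ | rewrite !hfeq fz12].
Qed.

Theorem theorem4p1 (G : Type) (mul : G -> G -> G) (one : G) (inv : G -> G)
  (X : uniformType) (act : G -> X -> X) (f : X -> X) (Y : set X) :
  is_group mul one inv ->
  is_action mul one act ->
  (forall g : G, unif_continuous (act g)) ->
  expansive_action act ->
  unif_continuous f ->
  (forall (g : G) (x : X), f (act g x) = act g (f x)) ->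
  uniform_embedding_on f Y ->
  exists2 V : set (X * X), entourage V &
    forall Z : set X,
      (forall (g : G) (z : X), Z z -> Z (act g z)) ->
      Z `<=` ent_img V Y ->
      {in Z &, injective f}.
Proof.
move=> _ _ _ [W0 eW0 hexp] hf hfeq hemb.
have [V eV hV] := uniform_embedding_on_fiber_ent hf hemb eW0.
exists V => // Z hZ ZV.
apply: (expansive_equivariant_injective hexp hfeq hZ) => z1 z2 Zz1 Zz2.
exact: hV (ZV _ Zz1) (ZV _ Zz2).
Qed.
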